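(* For $n,m\ge 0$ let $f(n,m)$ be the number of linked cycles on $[n]$ with exactly $m$ singly covered minimal elements. Then $f(1,1)=1$, $f(n,0)=0$ for $n\ge1$, $f(n,m)=0$ if $n<m$, and for all $n\ge2$, $m\ge1$, $$f(n,m)=m\,f(n,m+1)+f(n-1,m-1).$$
   Context: Two finite sets of integers $E,F$ are nearly disjoint if for every $i\in E\cap F$ either ($i=\min(E)$, $|E|>1$, $i\ne\min(F)$) or ($i=\min(F)$, $|F|>1$, $i\ne\min(E)$). A linked partition of $[n]$ is a set of nonempty subsets (blocks) of $[n]$ with union $[n]$, any two distinct blocks nearly disjoint; each element lies in one or two blocks (singly/doubly covered). A singly covered minimal element is a singly covered element that is the minimum of its block. A linked cycle on $[n]$ is a linked partition of $[n]$ together with a cyclic arrangement of the elements of each block. *)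

From mathcomp Require Import all_boot all_fingroup.
Set Implicit Arguments. Unset Strict Implicit. Unset Printing Implicit Defensive.

(* The ground set [n] = {1,...,n} is modelled by 'I_n = {0,...,n-1}
   via the order isomorphism i |-> i+1 (all notions below only use
   membership and the order, so counts are unchanged). *)

Section LinkedCycles.
Variable n : nat.
Local Notation T := ('I_n).

Definition is_min (i : T) (B : {set T}) : bool :=
  (i \in B) && [forall j in B, (i <= j)%N].

Definition nearly_disjoint (E F : {set T}) : bool :=
  [forall i in E :&: F,
     (is_min i E && (1 < #|E|) && ~~ is_min i F)
  || (is_min i F && (1 < #|F|) && ~~ is_min i E)].

Definition linked_partition (P : {set {set T}}) : bool :=
  [&& set0 \notin P,
      \bigcup_(B in P) B == [set: T]
    & [forall E in P, forall F in P, (E != F) ==> nearly_disjoint E F]].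

Definition cyclic_on (s : {perm T}) (B : {set T}) : bool :=
  [forall x, (x \notin B) ==> (s x == x)] &&
  [forall x in B, porbit s x == B].

(* A linked cycle: a linked partition P together with a cyclic arrangement
   c B of every block B of P (c is normalised to 1 off P, so that a linked
   cycle is determined exactly by P and the arrangements of its blocks). *)
Definition linked_cycle (P : {set {set T}}) (c : {ffun {set T} -> {perm T}})
  : bool :=
  linked_partition P &&
  [forall B, if B \in P then cyclic_on (c B) B else c B == 1%g].

Definition singly_covered (P : {set {set T}}) (i : T) : bool :=
  #|[set B in P | i \in B]| == 1%N.

Definition num_scme (P : {set {set T}}) : nat :=
  #|[set i : T | singly_covered P i && [exists B in P, is_min i B]]|.

End LinkedCycles.

Definition f (n m : nat) : nat :=
  #|[set x : {set {set 'I_n}} * {ffun {set 'I_n} -> {perm 'I_n}}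
        | linked_cycle x.1 x.2 && (num_scme x.1 == m)]|.

(* Induction on the ground set, adding a new maximum [a] to a ground set [A].
   In a linked cycle on [a |: A] either [{a}] is a block, whose removal leaves a
   linked cycle on [A] with one singly covered minimal element less, or [a] is
   the largest element of a unique block.  In the latter case, taking [a] out of
   its cycle leaves a linked cycle on [A] with the same singly covered minimal
   elements, and [a] is recovered from its predecessor [y] on the cycle and from
   the block of [y] it sat in, which [2 |A| - m] choices encode.  Hence
   f(n+1, m) = f(n, m-1) + (2n - m) f(n, m), from which the stated recurrence
   follows through 2(n - m) f(n, m) = m (2n - m - 1) f(n, m+1). *)

From mathcomp Require Import all_boot all_fingroup.
From mathcomp Require Import zify.
Set Implicit Arguments. Unset Strict Implicit. Unset Printing Implicit Defensive.

Section FiniteSets.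
Variable T : finType.
Implicit Types (x y z : T) (S C : {set T}).

Section ExistsIn.
Variable Q : pred T.

Lemma exists_setU1 x S : [exists y in x |: S, Q y] = Q x || [exists y in S, Q y].
Proof.
apply/exists_inP/orP => [[y /setU1P[-> | yS] Qy]|[Qx|/exists_inP[y yS Qy]]].
- by left.
- by right; apply/exists_inP; exists y.
- by exists x; rewrite ?setU11.
- by exists y; rewrite ?setU1r.
Qed.

Lemma exists_setU1D1 x x' S : Q x' = Q x ->
  [exists y in x' |: (S :\ x), Q y] = [exists y in x |: S, Q y].
Proof.
move=> Qx'; apply/exists_inP/exists_inP.
  case=> y /setU1P[->|/setD1P[_ yS]] Qy; first by exists x; rewrite ?setU11 -?Qx'.
  by exists y; rewrite ?setU1r.
case=> y /setU1P[->|yS] Qy; first by exists x'; rewrite ?setU11 ?Qx'.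
have [yx|yx] := eqVneq y x; first by exists x'; rewrite ?setU11 ?Qx' -?yx.
by exists y; rewrite // setU1r // !inE yx.
Qed.

End ExistsIn.

Lemma porbit_closed (s : {perm T}) x z : z \in porbit s x -> s z \in porbit s x.
Proof. by case/porbitP => k ->; rewrite -permM -expgSr mem_porbit. Qed.

Lemma porbit_subset (s : {perm T}) x C :
  x \in C -> (forall z, z \in C -> s z \in C) -> porbit s x \subset C.
Proof.
move=> xC sC; apply/subsetP => _ /porbitP[k ->].
by elim: k => [|k IHk]; rewrite ?expg0 ?perm1 // expgSr permM sC.
Qed.

End FiniteSets.

Lemma card_in_bij (X Y : finType) (SX : {set X}) (SY : {set Y}) (f : X -> Y) (g : Y -> X) :
  {in SX, forall x, f x \in SY} -> {in SY, forall y, g y \in SX} ->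
  {in SX, cancel f g} -> {in SY, cancel g f} -> #|SX| = #|SY|.
Proof.
move=> fS gS fK gK; rewrite -(card_in_imset (can_in_inj fK)); apply: eq_card => y.
apply/imsetP/idP => [[x xS ->]|yS]; first exact: fS.
by exists (g y); rewrite ?gK ?gS.
Qed.

Section Blocks.
Variable N : nat.
Local Notation T := ('I_N).
Implicit Types (B E F : {set T}) (i j x : T).

Lemma is_minP i B :
  reflect (i \in B /\ forall j, j \in B -> (i <= j)%N) (is_min i B).
Proof. by apply: (iffP andP) => -[iB /forall_inP]. Qed.

Lemma is_min_mem i B : is_min i B -> i \in B.
Proof. by case/is_minP. Qed.

Lemma is_min_set1 x i : is_min i [set x] = (i == x).
Proof.
apply/is_minP/eqP => [[/set1P //]|->].
by split=> [|j /set1P ->]; rewrite ?set11.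
Qed.

Lemma nearly_disjointP E F : reflect
  (forall i, i \in E -> i \in F ->
      (is_min i E && (1 < #|E|)%N && ~~ is_min i F)
   || (is_min i F && (1 < #|F|)%N && ~~ is_min i E))
  (nearly_disjoint E F).
Proof.
apply: (iffP forall_inP) => nd i; first by move=> iE iF; apply: nd; rewrite inE iE.
by case/setIP; apply: nd.
Qed.

Lemma nearly_disjointC E F : nearly_disjoint E F = nearly_disjoint F E.
Proof. by apply/nearly_disjointP/nearly_disjointP => nd i iE iF; rewrite orbC nd. Qed.

Lemma nearly_disjoint_min E F i : nearly_disjoint E F -> i \in E -> i \in F ->
  is_min i E != is_min i F.
Proof.
move=> /nearly_disjointP nd iE iF; move: (nd i iE iF).
by case: (is_min i E); case: (is_min i F); rewrite ?andbF.
Qed.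

Lemma nearly_disjoint_set1 x F : nearly_disjoint [set x] F = (x \notin F).
Proof.
apply/nearly_disjointP/idP => [nd|xF i /set1P-> xF']; last by rewrite xF' in xF.
apply/negP => /(nd x (set11 x)); rewrite is_min_set1 cards1 eqxx.
by rewrite /= andbF.
Qed.

End Blocks.

(** * Cyclic arrangements *)

Section CyclicArrangements.
Variable N : nat.
Local Notation T := ('I_N).
Implicit Types (B : {set T}) (s p q : {perm T}) (a x y z : T).

Lemma cyclic_onP s B : reflect
  ((forall x, x \notin B -> s x = x) /\ (forall x, x \in B -> porbit s x = B))
  (cyclic_on s B).
Proof.
apply: (iffP andP) => [[/forallP fixB /forall_inP orbB]|[fixB orbB]].
  by split=> x xB; apply/eqP; [apply: (implyP (fixB x)) | apply: orbB].
split; first by apply/forallP => x; apply/implyP => /fixB ->.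
by apply/forall_inP => x /orbB ->.
Qed.

Lemma cyclic_on_porbit s B x :
  (forall z, z \notin B -> s z = z) -> porbit s x = B -> cyclic_on s B.
Proof.
move=> fixB orbB; apply/cyclic_onP; split=> // z.
by rewrite -{1}orbB -eq_porbit_mem => /eqP->.
Qed.

Lemma cyclic_on_closed s B z : cyclic_on s B -> z \in B -> s z \in B.
Proof. by case/cyclic_onP => _ orbB zB; rewrite -(orbB z zB) porbit_closed ?porbit_id. Qed.

Lemma cyclic_on_fixed s B z : cyclic_on s B -> z \in B -> s z = z -> B = [set z].
Proof.
case/cyclic_onP => _ orbB zB sz; apply/eqP; rewrite eqEsubset -{1}(orbB z zB).
rewrite sub1set zB andbT; apply: porbit_subset; first exact: set11.
by move=> w /set1P->; rewrite sz set11.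
Qed.

Lemma cyclic_on1 y : cyclic_on 1%g [set y].
Proof.
apply: (cyclic_on_porbit (x := y)) => [z _|]; first by rewrite perm1.
apply/eqP; rewrite eqEsubset sub1set porbit_id andbT.
by apply: porbit_subset => [|z /set1P->]; rewrite ?perm1 set11.
Qed.

Lemma cyclic_on_set1 s y : cyclic_on s [set y] -> s = 1%g.
Proof.
move=> sy; apply/permP => x; rewrite perm1.
have [->|xy] := eqVneq x y; last by apply: (cyclic_onP _ _ sy).1; rewrite inE.
by apply/set1P/(cyclic_on_closed sy); rewrite set11.
Qed.

(* [perm_insert y a q] puts [a] right after [y] on its cycle, [perm_remove a p]
   takes [a] out of its cycle. *)
Definition perm_insert y a q := (tperm y a * q)%g.
Definition perm_remove a p := (p * tperm a (p a))%g.

Lemma perm_removeK p y a : p y = a -> perm_insert y a (perm_remove a p) = p.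
Proof.
move=> pya; apply/permP => x; rewrite !permM.
case: (tpermP y a x) => [->|->|/eqP xy /eqP xa]; rewrite ?pya ?tpermR ?tpermL //.
rewrite tpermD //; last by rewrite (inj_eq perm_inj) eq_sym.
by rewrite -pya (inj_eq perm_inj) eq_sym.
Qed.

Lemma perm_insertK q y a : q a = a -> perm_remove a (perm_insert y a q) = q.
Proof.
move=> qa; rewrite /perm_remove [perm_insert _ _ _ a]permM tpermR.
apply/permP => x; rewrite !permM.
case: (tpermP y a x) => [->|->|/eqP xy /eqP xa]; rewrite ?qa ?tpermL ?tpermR //.
rewrite tpermD //; last by apply: contra xy => /eqP/perm_inj ->.
by rewrite -{1}qa; apply: contra xa => /eqP/perm_inj ->.
Qed.

Lemma cyclic_on_insert q B y a : cyclic_on q B -> y \in B -> a \notin B ->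
  cyclic_on (perm_insert y a q) (a |: B).
Proof.
move=> qB yB aB; have [qfix qorb] := cyclic_onP _ _ qB.
set r := perm_insert y a q.
have ry : r y = a by rewrite permM tpermL qfix.
have ra : r a = q y by rewrite permM tpermR.
have rq z : z != y -> z != a -> r z = q z.
  by move=> zy za; rewrite permM tpermD // eq_sym.
apply: (cyclic_on_porbit (x := a)) => [z|].
  rewrite in_setU1 negb_or => /andP[za zB]; rewrite rq ?qfix //.
  by apply: contraNneq zB => ->.
apply/eqP; rewrite eqEsubset; apply/andP; split.
  apply: porbit_subset => [|z]; first exact: setU11.
  rewrite in_setU1 => /orP[/eqP->|zB]; first by rewrite ra setU1r ?(cyclic_on_closed qB).
  have [->|zy] := eqVneq z y; first by rewrite ry setU11.
  by rewrite rq ?setU1r ?(cyclic_on_closed qB) //; apply: contraNneq aB => <-.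
rewrite subUset sub1set porbit_id -(qorb y yB).
apply: porbit_subset => [|z za]; first by rewrite porbit_sym -{1}ry (mem_porbit r 1).
have [->|zy] := eqVneq z y; first by rewrite -ra porbit_closed ?porbit_id.
have [->|zna] := eqVneq z a; first by rewrite qfix ?porbit_id.
by rewrite -rq ?porbit_closed.
Qed.

Lemma cyclic_on_remove p B a : cyclic_on p B -> a \in B -> B != [set a] ->
  cyclic_on (perm_remove a p) (B :\ a).
Proof.
move=> pB aB Ba; have [pfix porb] := cyclic_onP _ _ pB.
have paa : p a != a by apply: contraNneq Ba => /(cyclic_on_fixed pB aB) ->.
set s := perm_remove a p.
have sa : s a = a by rewrite permM tpermR.
have sp z : z != a -> p z != a -> s z = p z.
  move=> za pza; rewrite permM tpermD // eq_sym //.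
  by apply: contra za => /eqP/perm_inj ->.
have paBa : p a \in B :\ a by rewrite !inE paa (cyclic_on_closed pB).
apply: (cyclic_on_porbit (x := p a)) => [z|].
  rewrite !inE negb_and negbK => /orP[/eqP-> //|zB].
  have za : z != a by apply: contraNneq zB => ->.
  by rewrite sp // ?pfix //; apply: pfix.
apply/eqP; rewrite eqEsubset; apply/andP; split.
  apply: porbit_subset => // z /setD1P[za zB].
  have [pza|pza] := eqVneq (p z) a; first by rewrite permM pza tpermL.
  by rewrite sp // !inE pza (cyclic_on_closed pB).
have: B \subset a |: porbit s (p a).
  rewrite -(porb (p a)) ?(cyclic_on_closed pB) //.
  apply: porbit_subset => [|z]; first by rewrite setU1r ?porbit_id.
  have [-> _|za] := eqVneq z a; first by rewrite setU1r ?porbit_id.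
  rewrite in_setU1 (negbTE za) /= => zO.
  have [->|pza] := eqVneq (p z) a; first exact: setU11.
  by rewrite -sp ?setU1r ?porbit_closed.
by move/subsetP=> BO; apply/subsetP => z /setD1P[za /BO]; rewrite in_setU1 (negbTE za).
Qed.

End CyclicArrangements.

(** * Linked cycles on a ground set *)

Section LinkedCyclesOn.
Variable N : nat.
Local Notation T := ('I_N).
Implicit Types (A B E F X : {set T}) (P : {set {set T}}) (c : {ffun {set T} -> {perm T}}) (i : T).

(* For [A = [set: T]] these are [linked_partition] and [linked_cycle]. *)
Definition linked_partition_on A P : bool :=
  [&& set0 \notin P, \bigcup_(B in P) B == A &
      [forall E in P, forall F in P, (E != F) ==> nearly_disjoint E F]].

Definition cyclic_arrangement P c : bool :=
  [forall B, if B \in P then cyclic_on (c B) B else c B == 1%g].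

Definition linked_cycle_on A P c := linked_partition_on A P && cyclic_arrangement P c.

Definition scme P := [set i | singly_covered P i && [exists B in P, is_min i B]].

Definition linked_cycles_on A m :=
  [set x : {set {set T}} * {ffun {set T} -> {perm T}} |
     linked_cycle_on A x.1 x.2 && (num_scme x.1 == m)].

Lemma linked_partition_onP A P : reflect
  [/\ set0 \notin P, forall B i, B \in P -> i \in B -> i \in A,
      forall i, i \in A -> exists2 B, B \in P & i \in B &
      forall E F, E \in P -> F \in P -> E != F -> nearly_disjoint E F]
  (linked_partition_on A P).
Proof.
apply: (iffP and3P) => [[P0 /eqP <- /forall_inP nd]|[P0 PA AP nd]].
  split=> // [B i BP iB|i /bigcupP[B BP iB]|E F EP FP].
  - by apply/bigcupP; exists B.
  - by exists B.
  - exact: implyP (forall_inP (nd E EP) F FP).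
split=> //; last by do 2!apply/forall_inP => ? ?; apply/implyP; apply: nd.
apply/eqP/setP => i; apply/bigcupP/idP => [[B BP /(PA B i BP)] //|/AP].
by case=> B BP iB; exists B.
Qed.

Lemma cyclic_arrangementP P c : reflect
  ((forall B, B \in P -> cyclic_on (c B) B) /\ (forall B, B \notin P -> c B = 1%g))
  (cyclic_arrangement P c).
Proof.
apply: (iffP forallP) => [cP|[cP c1] B].
  by split=> B BP; move: (cP B); rewrite ?BP ?(negbTE BP) // => /eqP.
by case: ifP => BP; [apply: cP | rewrite c1 ?BP].
Qed.

(* In a linked partition an element lies in at most two blocks, being the
   minimum of exactly one of them when it lies in two. *)
Lemma mem_scme A P i : linked_partition_on A P ->
  (i \in scme P) = [exists B in P, is_min i B]
                   && ~~ [exists B in P, (i \in B) && ~~ is_min i B].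
Proof.
case/linked_partition_onP => _ _ _ nd; rewrite inE /singly_covered andbC.
apply: andb_id2l => /exists_inP[B BP iminB]; have iB := is_min_mem iminB.
apply/cards1P/exists_inPn => [[B1 PiB1] F FP|nonmin].
  have blockE G : G \in P -> i \in G -> G = B1.
    by move=> GP iG; apply/set1P; rewrite -PiB1 inE GP.
  by apply/negP => /andP[iF]; rewrite (blockE F FP iF) -(blockE B BP iB) iminB.
exists B; apply/setP => F; rewrite !inE; apply/andP/eqP => [[FP iF]|->//].
apply/eqP; apply: contraT => FB; have := nearly_disjoint_min (nd F B FP BP FB) iF iB.
by have := nonmin F FP; rewrite iF iminB /= negbK => ->.
Qed.

Lemma scme_sub A P : linked_partition_on A P -> scme P \subset A.
Proof.
case/linked_partition_onP => _ PA _ _; apply/subsetP => i.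
by rewrite inE => /andP[_ /exists_inP[B BP /is_min_mem]]; apply: PA.
Qed.

End LinkedCyclesOn.

(** * Adding a new maximum *)

Section AddMaximum.
Variable N : nat.
Local Notation T := ('I_N).
Local Notation LT := ({set {set T}} * {ffun {set T} -> {perm T}})%type.
Implicit Types (B E F X : {set T}) (P : {set {set T}}) (c : {ffun {set T} -> {perm T}}) (i j y : T).

Variables (a : T) (A : {set T}).
Hypotheses (aA : a \notin A) (a_max : forall x, x \in A -> x < a).

Lemma max_notin_block P B : linked_partition_on A P -> B \in P -> a \notin B.
Proof. by case/linked_partition_onP => _ PA _ _ BP; apply: contra aA; apply: PA. Qed.

Lemma set1_max_notin P : linked_partition_on A P -> [set a] \notin P.
Proof. by move=> lp; apply: contraL (set11 a); apply: max_notin_block. Qed.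

Lemma is_min_setU1_max B i : B \subset A -> i != a -> is_min i (a |: B) = is_min i B.
Proof.
move=> BA ia; apply/is_minP/is_minP => -[iB imin]; split.
- by move: iB; rewrite in_setU1 (negbTE ia).
- by move=> j jB; apply: imin; rewrite setU1r.
- exact: setU1r.
move=> j /setU1P[->|]; last exact: imin.
exact/ltnW/a_max/(subsetP BA).
Qed.

Lemma not_is_min_max B j : B \subset a |: A -> j \in B -> j != a -> ~~ is_min a B.
Proof.
move=> BA jB ja; have jA : j \in A by move: (subsetP BA j jB); rewrite in_setU1 (negbTE ja).
by apply/negP => /is_minP[_ /(_ j jB)]; rewrite leqNgt a_max.
Qed.

Lemma linked_partition_on_add1 P :
  linked_partition_on A P -> linked_partition_on (a |: A) ([set a] |: P).
Proof.
move=> lp; have /linked_partition_onP[P0 PA AP nd] := lp.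
apply/linked_partition_onP; split.
- rewrite !inE negb_or P0 andbT eq_sym; apply/set0Pn; exists a; exact: set11.
- move=> B i /setU1P[->/set1P->|BP iB]; first exact: setU11.
  by rewrite setU1r // (PA B i BP iB).
- move=> i /setU1P[->|/AP[B BP iB]]; first by exists [set a]; rewrite ?setU11 ?set11.
  by exists B; rewrite ?setU1r.
- move=> E F /setU1P[->|EP] /setU1P[->|FP] EF.
  + by rewrite eqxx in EF.
  + by rewrite nearly_disjoint_set1 (max_notin_block lp FP).
  + by rewrite nearly_disjointC nearly_disjoint_set1 (max_notin_block lp EP).
  + exact: nd.
Qed.

Lemma linked_cycle_on_add1 P c :
  linked_cycle_on A P c -> linked_cycle_on (a |: A) ([set a] |: P) c.
Proof.
case/andP => lp /cyclic_arrangementP[cP c1].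
rewrite /linked_cycle_on linked_partition_on_add1 //.
apply/cyclic_arrangementP; split=> B; rewrite !inE ?negb_or.
  by case/orP => [/eqP->|/cP//]; rewrite c1 ?set1_max_notin //; apply: cyclic_on1.
by case/andP => _ /c1.
Qed.

Lemma linked_cycle_on_del1 P c : linked_cycle_on (a |: A) P c -> [set a] \in P ->
  linked_cycle_on A (P :\ [set a]) c.
Proof.
case/andP => /linked_partition_onP[P0 PA AP nd] /cyclic_arrangementP[cP c1] aP.
have aF F : F \in P -> F != [set a] -> a \notin F.
  by move=> FP Fa; rewrite -nearly_disjoint_set1; apply: nd; rewrite // eq_sym.
apply/andP; split.
  apply/linked_partition_onP; split.
  - by rewrite !inE negb_and P0 orbT.
  - move=> B i /setD1P[Ba BP] iB; move: (PA B i BP iB); rewrite in_setU1.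
    by case/orP => [/eqP ia|//]; move: iB; rewrite ia (negbTE (aF B BP Ba)).
  - move=> i iA; have [B BP iB] := AP i (setU1r a iA); exists B => //.
    by rewrite !inE BP andbT; apply: contraTneq iB => ->; rewrite inE; apply: contraNneq aA => <-.
  - by move=> E F /setD1P[_ EP] /setD1P[_ FP]; apply: nd.
apply/cyclic_arrangementP; split=> B; rewrite !inE ?negb_and ?negbK.
  by case/andP => _; apply: cP.
by case/orP => [/eqP->|/c1//]; apply: (@cyclic_on_set1 _ _ a); apply: cP.
Qed.

Lemma scme_add1 P : linked_partition_on A P -> scme ([set a] |: P) = a |: scme P.
Proof.
move=> lp; apply/setP => i.
rewrite in_setU1 (mem_scme _ lp) (mem_scme _ (linked_partition_on_add1 lp)).
rewrite !exists_setU1 is_min_set1 inE; have [->|//] := eqVneq i a.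
rewrite andbN /=; apply/exists_inP => -[B BP /andP[aB _]].
by rewrite (negbTE (max_notin_block lp BP)) in aB.
Qed.

Lemma num_scme_add1 P : linked_partition_on A P -> num_scme ([set a] |: P) = (num_scme P).+1.
Proof.
move=> lp; rewrite /num_scme -/(scme _) -/(scme _) scme_add1 // cardsU1.
by rewrite (contraNN (subsetP (scme_sub lp) a)).
Qed.

Lemma card_linked_cycles_set1 m :
  #|[set x in linked_cycles_on (a |: A) m | [set a] \in x.1]|
  = if m is m'.+1 then #|linked_cycles_on A m'| else 0.
Proof.
case: m => [|m].
  apply/eqP; rewrite cards_eq0; apply/eqP/setP => -[P c]; rewrite !inE /=.
  apply/negbTE/negP => /andP[/andP[lc /eqP scme0] aP].
  have /andP[lp _] := linked_cycle_on_del1 lc aP.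
  by move: scme0; rewrite -(setD1K aP) num_scme_add1.
symmetry; apply: (card_in_bij (f := fun x : LT => ([set a] |: x.1, x.2))
                              (g := fun x : LT => (x.1 :\ [set a], x.2))) => -[P c];
  rewrite !inE /=.
- case/andP => lc /eqP <-; have /andP[lp _] := lc.
  by rewrite linked_cycle_on_add1 // num_scme_add1 // !eqxx.
- case/andP => /andP[lc scmeP] aP; have lc' := linked_cycle_on_del1 lc aP.
  have /andP[lp _] := lc'.
  by move: scmeP; rewrite lc' -{1}(setD1K aP) num_scme_add1.
- by case/andP => /andP[lp _] _; rewrite setU1K // set1_max_notin.
- by case/andP => _ aP; rewrite setD1K.
Qed.

(* A choice [(y, b)] says where [a] goes: right after [y] on the cycle of the
   block in which [y] is ([b = false]) or is not ([b = true]) the minimum;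
   if [y] is the minimum of no block, [a] forms the new block [{y, a}]. *)
Definition choices P := [set ch : T * bool | (ch.1 \in A) && (ch.2 ==> (ch.1 \notin scme P))].

Definition attach_block P y (b : bool) : {set T} :=
  odflt [set y] [pick B in P | (y \in B) && (is_min y B != b)].

Definition insert_partition P y b : {set {set T}} :=
  let B := attach_block P y b in (a |: B) |: (P :\ B).

Definition insert_arrangement P c y b : {ffun {set T} -> {perm T}} :=
  let B := attach_block P y b in
  [ffun X => if X == a |: B then perm_insert y a (c B) else if X == B then 1%g else c X].

Definition max_block P : {set T} := odflt set0 [pick B in P | a \in B].

Definition residue P := max_block P :\ a.

Definition max_pred P c : T := ((c (max_block P))^-1)%g a.

(* A singleton block may not share its element with another block. *)
Definition residue_dropped P c : bool :=
  (residue P == [set max_pred P c]) && [exists F in P :\ max_block P, max_pred P c \in F].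

Definition remove_partition P c : {set {set T}} :=
  if residue_dropped P c then P :\ max_block P else residue P |: (P :\ max_block P).

Definition remove_arrangement P c : {ffun {set T} -> {perm T}} :=
  [ffun X => if X == residue P then perm_remove a (c (max_block P))
             else if X == max_block P then 1%g else c X].

Definition removed_choice P c : T * bool :=
  (max_pred P c, ~~ is_min (max_pred P c) (residue P)).

Section Insert.
Variables (P : {set {set T}}) (c : {ffun {set T} -> {perm T}}) (y : T) (b : bool).
Hypotheses (lcP : linked_cycle_on A P c) (ych : (y, b) \in choices P).
Local Notation B := (attach_block P y b).

Lemma attach_blockP : [/\ y \in B, is_min y B = ~~ b &
  B \notin P -> B = [set y] /\ forall F, F \in P -> y \in F -> ~~ is_min y F].
Proof.
have /andP[lp _] := lcP; move: ych; rewrite inE /= => /andP[yA yscme].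
rewrite /attach_block; case: pickP => [F /andP[FP /andP[yF]]|none] /=.
  by rewrite FP => ymin; split=> //; move: ymin; case: (is_min y F); case: (b).
have minE F : F \in P -> y \in F -> is_min y F = b.
  by move=> FP yF; move: (none F); rewrite FP yF /= => /negbFE/eqP.
case: b yscme minE => [yscme|_] minE {none}; last first.
  by rewrite set11 is_min_set1 eqxx; split=> // _; split=> // F FP /minE->.
case/linked_partition_onP: (lp) => _ _ /(_ y yA)[F FP yF] _.
move: yscme; rewrite (mem_scme _ lp) negb_and.
case/orP => [/exists_inPn nomin|/negPn/exists_inP[G GP /andP[yG]]]; last by rewrite minE.
by move: (nomin F FP); rewrite minE.
Qed.

Lemma attach_block_sub : B \subset A.
Proof.
have [yB _ Bnew] := attach_blockP; have [BP|/Bnew[-> _]] := boolP (B \in P).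
  by case/andP: lcP => /linked_partition_onP[_ PA _ _] _; apply/subsetP => i; apply: PA.
by rewrite sub1set; move: ych; rewrite inE => /andP[].
Qed.

Lemma notin_attach_block : a \notin B.
Proof. by apply: contra aA; apply: (subsetP attach_block_sub). Qed.

Lemma nearly_disjoint_attach F : F \in P -> F != B -> nearly_disjoint (a |: B) F.
Proof.
have /andP[lp _] := lcP; have /linked_partition_onP[_ _ _ nd] := lp.
have [yB yminB Bnew] := attach_blockP.
move=> FP FB; apply/nearly_disjointP => i iBa iF.
have ia : i != a by apply: contraNneq (max_notin_block lp FP) => <-.
have iB : i \in B by move: iBa; rewrite in_setU1 (negbTE ia).
rewrite is_min_setU1_max ?attach_block_sub // cardsU1 notin_attach_block ltnS card_gt0.
have -> : B != set0 by apply/set0Pn; exists y.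
have [BP|/Bnew[Bset nonmin]] := boolP (B \in P).
  have BF : B != F by rewrite eq_sym.
  move/nearly_disjointP: (nd B F BP FP BF) => /(_ i iB iF).
  by case: (is_min i B); case: (is_min i F); rewrite /= ?andbF ?andbT.
by move: iB iF; rewrite Bset is_min_set1 => /set1P-> yF; rewrite eqxx nonmin.
Qed.

Lemma insert_linked_partition : linked_partition_on (a |: A) (insert_partition P y b).
Proof.
have /andP[/linked_partition_onP[P0 PA AP nd] _] := lcP.
apply/linked_partition_onP; split.
- rewrite !inE negb_or negb_and P0 orbT andbT eq_sym.
  by apply/set0Pn; exists a; apply: setU11.
- move=> X i; rewrite !inE => /orP[/eqP->|/andP[_ XP] iX]; last by rewrite (PA X i XP iX) orbT.
  by case/setU1P => [->|/(subsetP attach_block_sub) ->]; rewrite ?eqxx ?orbT.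
- move=> i /setU1P[->|iA]; first by exists (a |: B); rewrite !inE ?eqxx.
  have [X XP iX] := AP i iA; have [XB|XB] := eqVneq X B.
    by exists (a |: B); rewrite !inE ?eqxx // -XB iX orbT.
  by exists X; rewrite // !inE XB XP orbT.
- move=> E F; rewrite !inE => /orP[/eqP->|/andP[EB EP]] /orP[/eqP->|/andP[FB FP]] EF.
  + by rewrite eqxx in EF.
  + exact: nearly_disjoint_attach.
  + by rewrite nearly_disjointC nearly_disjoint_attach.
  + exact: nd.
Qed.

Lemma cyclic_on_attach_block : cyclic_on (c B) B.
Proof.
have /andP[_ /cyclic_arrangementP[cP c1]] := lcP; have [_ _ Bnew] := attach_blockP.
have [|BnP] := boolP (B \in P); first exact: cP.
by have [Bset _] := Bnew BnP; rewrite c1 // Bset; apply: cyclic_on1.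
Qed.

Lemma insert_cyclic_arrangement :
  cyclic_arrangement (insert_partition P y b) (insert_arrangement P c y b).
Proof.
have /andP[lp /cyclic_arrangementP[cP c1]] := lcP; have [yB _ _] := attach_blockP.
have PBa X : X \in P -> X != a |: B.
  by move=> XP; apply: contraNneq (max_notin_block lp XP) => ->; apply: setU11.
apply/cyclic_arrangementP; split=> X; rewrite !inE ffunE.
  case/orP => [/eqP->|/andP[XB XP]]; last by rewrite (negbTE (PBa X XP)) (negbTE XB) cP.
  by rewrite eqxx cyclic_on_insert ?notin_attach_block ?cyclic_on_attach_block.
rewrite negb_or negb_and negbK => /andP[/negbTE-> /orP[/eqP->|XP]]; first by rewrite eqxx.
by case: eqP => // _; rewrite c1.
Qed.

Lemma set1_max_notin_insert : [set a] \notin insert_partition P y b.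
Proof.
have /andP[lp _] := lcP; have [yB _ _] := attach_blockP.
have ya : y != a by apply: contraNneq aA => <-; apply: (subsetP attach_block_sub).
rewrite !inE negb_or negb_and (set1_max_notin lp) orbT andbT.
by apply: contraNneq ya => /setP/(_ y); rewrite in_setU1 yB orbT inE => ->.
Qed.

Lemma scme_insert : scme (insert_partition P y b) = scme P.
Proof.
have /andP[lp _] := lcP; have /linked_partition_onP[_ _ AP _] := lp.
have [yB yminB Bnew] := attach_blockP.
have yA : y \in A := subsetP attach_block_sub y yB.
apply/setP => i; rewrite (mem_scme _ insert_linked_partition) (mem_scme _ lp).
have [->|ia] := eqVneq i a.
  have -> : [exists X in P, is_min a X] = false.
    by apply/exists_inP => -[X XP /is_min_mem]; rewrite (negbTE (max_notin_block lp XP)).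
  apply/negbTE/nandP; left; apply/exists_inPn => X; rewrite !inE.
  case/orP => [/eqP->|/andP[_ XP]]; last exact: contraNN (@is_min_mem _ _ _) (max_notin_block lp XP).
  apply: (not_is_min_max (j := y)); rewrite ?setU1r ?setUS ?attach_block_sub //.
  by apply: contraNneq aA => <-.
rewrite !(@exists_setU1D1 _ (is_min i)) ?is_min_setU1_max ?attach_block_sub //.
rewrite !(@exists_setU1D1 _ (fun X => (i \in X) && ~~ is_min i X)); last first.
  by rewrite in_setU1 (negbTE ia) is_min_setU1_max ?attach_block_sub.
have [BP|/Bnew[Bset nonmin]] := boolP (B \in P).
  by have /setUidPr-> : [set B] \subset P by rewrite sub1set.
rewrite Bset !exists_setU1 is_min_set1 inE andbN /=; have [iy|//] := eqVneq i y.
have [F FP yF] := AP y yA.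
have -> : [exists X in P, (i \in X) && ~~ is_min i X].
  by apply/exists_inP; exists F; rewrite // iy yF nonmin.
by rewrite !andbF.
Qed.

End Insert.

Lemma mem_remove_partition P c X : (X \in remove_partition P c) =
  ((X == residue P) && ~~ residue_dropped P c) || ((X != max_block P) && (X \in P)).
Proof. by rewrite /remove_partition; case: residue_dropped; rewrite !inE /= ?andbF ?andbT. Qed.

Section Remove.
Variables (P : {set {set T}}) (c : {ffun {set T} -> {perm T}}).
Hypotheses (lcP : linked_cycle_on (a |: A) P c) (aP : [set a] \notin P).
Local Notation B := (max_block P).
Local Notation y := (max_pred P c).

Lemma max_blockP : [/\ B \in P, a \in B & forall F, F \in P -> a \in F -> F = B].
Proof.
have /andP[/linked_partition_onP[_ PA AP nd] _] := lcP.
have aminF F : F \in P -> a \in F -> ~~ is_min a F.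
  move=> FP aF; have FA : F \subset a |: A by apply/subsetP => i; apply: PA.
  have [j jF ja] : exists2 j, j \in F & j != a.
    apply/exists_inP; move: aP; apply: contraNT => /exists_inPn Fa.
    suff -> : [set a] = F by [].
    apply/setP => i; rewrite inE; apply/eqP/idP => [->//|iF].
    by apply/eqP; rewrite -[i == a]negbK Fa.
  exact: not_is_min_max FA jF ja.
have [B0 B0P aB0] := AP a (setU11 a A).
have blockE F : F \in P -> a \in F -> F = B0.
  move=> FP aF; apply/eqP; apply: contraT => FB0.
  have := nearly_disjoint_min (nd F B0 FP B0P FB0) aF aB0.
  by rewrite (negbTE (aminF F FP aF)) (negbTE (aminF B0 B0P aB0)).
rewrite /max_block; case: pickP => [F /andP[FP aF]|/(_ B0)]; last by rewrite B0P aB0.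
by rewrite /= (blockE F FP aF); split=> // G GP aG; apply: blockE.
Qed.

Lemma max_block_neq1 : B != [set a].
Proof. by have [BP _ _] := max_blockP; apply: contraNneq aP => <-. Qed.

Lemma cyclic_on_max_block : cyclic_on (c B) B.
Proof.
by have [BP _ _] := max_blockP; case/andP: lcP => _ /cyclic_arrangementP[cP _]; apply: cP.
Qed.

Lemma residueK : a |: residue P = B.
Proof. by have [_ aB _] := max_blockP; apply: setD1K. Qed.

Lemma residue_sub : residue P \subset A.
Proof.
have [BP _ _] := max_blockP; case/andP: lcP => /linked_partition_onP[_ PA _ _] _.
apply/subsetP => i /setD1P[ia /(PA B i BP)]; by rewrite in_setU1 (negbTE ia).
Qed.

Lemma max_predP : [/\ c B y = a, y \in residue P & y != a].
Proof.
have [BP aB _] := max_blockP; have cB := cyclic_on_max_block.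
have cy : c B y = a by rewrite permKV.
have ya : y != a.
  by apply: contraNneq max_block_neq1 => ya; apply/eqP/(cyclic_on_fixed cB aB); rewrite -{1}ya.
split; rewrite // !inE ya /=; apply: contraT => yB.
by move: aB; rewrite -cy (cyclic_onP _ _ cB).1 ?(negbTE yB).
Qed.

Lemma is_min_max_block i : i != a -> is_min i B = is_min i (residue P).
Proof. by move=> ia; rewrite -{1}residueK is_min_setU1_max ?residue_sub. Qed.

Lemma residue_notin : residue P \notin P.
Proof.
have /andP[/linked_partition_onP[_ _ _ nd] _] := lcP; have [BP aB _] := max_blockP.
have [_ yBo ya] := max_predP; have yB : y \in B by move: yBo => /setD1P[].
apply/negP => BoP; have BoB : residue P != B by apply: contraTneq aB => <-; rewrite setD11.
by have := nearly_disjoint_min (nd _ _ BoP BP BoB) yBo yB; rewrite is_min_max_block ?eqxx.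
Qed.

Lemma nearly_disjoint_residue F : F \in P -> F != B -> ~~ residue_dropped P c ->
  nearly_disjoint (residue P) F.
Proof.
have /andP[/linked_partition_onP[_ _ _ nd] _] := lcP; have [BP _ _] := max_blockP.
have [_ yBo _] := max_predP.
move=> FP FB kept; apply/nearly_disjointP => i iBo iF; have [ia iB] := setD1P iBo.
have BF : B != F by rewrite eq_sym.
have card_Bo : 1 < #|residue P|.
  rewrite ltnNge; apply: contra kept => Bo1.
  have Bo_y : residue P = [set y] by apply/eqP; rewrite eq_sym eqEcard sub1set yBo cards1.
  rewrite /residue_dropped Bo_y eqxx; apply/exists_inP; exists F; first by rewrite !inE FB.
  by move: iBo iF; rewrite Bo_y => /set1P->.
move/nearly_disjointP: (nd B F BP FP BF) => /(_ i iB iF); rewrite is_min_max_block // card_Bo.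
by case: (is_min i _); case: (is_min i F); rewrite /= ?andbF ?andbT.
Qed.

Lemma remove_linked_partition : linked_partition_on A (remove_partition P c).
Proof.
have /andP[/linked_partition_onP[P0 PA AP nd] _] := lcP.
have [BP aB Buniq] := max_blockP; have [_ yBo _] := max_predP.
apply/linked_partition_onP; split.
- rewrite mem_remove_partition negb_or !negb_and P0 orbT andbT.
  by apply/orP; left; apply: contraTneq yBo => <-; rewrite inE.
- move=> X i; rewrite mem_remove_partition.
  case/orP => [/andP[/eqP-> _]|/andP[XB XP] iX]; first exact: (subsetP residue_sub).
  move: (PA X i XP iX); rewrite in_setU1 => /orP[/eqP ia|//].
  by move: XB; rewrite (Buniq X XP) ?eqxx // -ia.
- move=> i iA; have [X XP iX] := AP i (setU1r a iA).
  have [XB|XB] := eqVneq X B; last by exists X; rewrite // mem_remove_partition XB XP orbT.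
  have iBo : i \in residue P.
    by rewrite !inE -XB iX andbT; apply: contraNneq aA => <-.
  case dropped: (residue_dropped P c).
    case/andP: dropped => /eqP Bo_y /exists_inP[F /setD1P[FB FP] yF].
    by exists F; rewrite ?mem_remove_partition ?FB ?FP ?orbT //; move: iBo; rewrite Bo_y => /set1P->.
  by exists (residue P); rewrite // mem_remove_partition eqxx dropped.
- move=> E F; rewrite !mem_remove_partition.
  case/orP => [/andP[/eqP-> kept]|/andP[EB EP]] /orP[/andP[/eqP-> kept']|/andP[FB FP]] EF.
  + by rewrite eqxx in EF.
  + exact: nearly_disjoint_residue.
  + by rewrite nearly_disjointC nearly_disjoint_residue.
  + exact: nd.
Qed.

Lemma remove_cyclic_arrangement :
  cyclic_arrangement (remove_partition P c) (remove_arrangement P c).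
Proof.
have /andP[_ /cyclic_arrangementP[cP c1]] := lcP; have [BP aB _] := max_blockP.
have cBo := cyclic_on_remove cyclic_on_max_block aB max_block_neq1.
have PBo X : X \in P -> X != residue P by move=> XP; apply: contraNneq residue_notin => <-.
apply/cyclic_arrangementP; split=> X; rewrite mem_remove_partition ffunE.
  case/orP => [/andP[/eqP-> _]|/andP[XB XP]]; first by rewrite eqxx.
  by rewrite (negbTE (PBo X XP)) (negbTE XB) cP.
rewrite negb_or negb_and negbK => /andP[dropped].
have [XBo|XBo] := eqVneq X (residue P).
  move: dropped; rewrite XBo eqxx /= => /andP[/eqP Bo_y _] _.
  by apply: (@cyclic_on_set1 _ _ y); rewrite -Bo_y.
have [->|XB] := eqVneq X B => //= XP; exact: c1.
Qed.

Lemma removed_choiceP : removed_choice P c \in choices (remove_partition P c).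
Proof.
have [_ yBo _] := max_predP.
rewrite inE /= (subsetP residue_sub) //=; apply/implyP => ynmin.
have BoP : residue P \in remove_partition P c.
  rewrite mem_remove_partition eqxx /=; apply/orP; left.
  by apply: contra ynmin => /andP[/eqP-> _]; rewrite is_min_set1.
rewrite (mem_scme _ remove_linked_partition) negb_and; apply/orP; right.
by apply/negPn/exists_inP; exists (residue P); rewrite // yBo.
Qed.

Lemma attach_block_remove :
  attach_block (remove_partition P c) y (~~ is_min y (residue P)) = residue P.
Proof.
have /andP[/linked_partition_onP[_ _ _ nd] _] := lcP; have [BP _ _] := max_blockP.
have [_ yBo ya] := max_predP; have yB : y \in B by case/setD1P: yBo.
rewrite /attach_block; case: pickP => [X /andP[XP /andP[yX yminX]]|none] /=.
  apply/eqP; apply: contraT => XBo.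
  move: XP; rewrite mem_remove_partition (negbTE XBo) /= => /andP[XB XP].
  have := nearly_disjoint_min (nd X B XP BP XB) yX yB; rewrite is_min_max_block //.
  by move: yminX; case: (is_min y X); case: (is_min y _).
case dropped: (residue_dropped P c); first by case/andP: dropped => /eqP->.
by move: (none (residue P)); rewrite mem_remove_partition eqxx dropped yBo /=; case: is_min.
Qed.

Lemma insert_remove :
  let ch := removed_choice P c in
  insert_partition (remove_partition P c) ch.1 ch.2 = P /\
  insert_arrangement (remove_partition P c) (remove_arrangement P c) ch.1 ch.2 = c.
Proof.
have /andP[_ /cyclic_arrangementP[_ c1]] := lcP; have [BP _ _] := max_blockP.
have [cy _ _] := max_predP.
rewrite /= /insert_partition /insert_arrangement attach_block_remove residueK; split.
  have -> : remove_partition P c :\ residue P = P :\ B.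
    apply/setP => X; rewrite !inE mem_remove_partition.
    by have [->|] := eqVneq X (residue P); rewrite ?(negbTE residue_notin) ?andbF.
  exact: setD1K.
apply/ffunP => X; rewrite !ffunE; have [->|XB] := eqVneq X B.
  by rewrite eqxx perm_removeK.
by have [->|//] := eqVneq X (residue P); rewrite c1 ?residue_notin.
Qed.

End Remove.

Lemma remove_insert P c y b : linked_cycle_on A P c -> (y, b) \in choices P ->
  let P' := insert_partition P y b in let c' := insert_arrangement P c y b in
  [/\ remove_partition P' c' = P, remove_arrangement P' c' = c & removed_choice P' c' = (y, b)].
Proof.
move=> lcP ych P' c'; set B := attach_block P y b.
have /andP[lp /cyclic_arrangementP[_ c1]] := lcP; have /linked_partition_onP[_ _ AP nd] := lp.
have [yB yminB Bnew] := attach_blockP lcP ych; rewrite -/B in Bnew.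
have aB : a \notin B := notin_attach_block lcP ych.
have lc' : linked_cycle_on (a |: A) P' c'.
  by rewrite /linked_cycle_on (insert_linked_partition lcP ych) (insert_cyclic_arrangement lcP ych).
have maxE : a |: B = max_block P'.
  case: (max_blockP lc' (set1_max_notin_insert lcP ych)) => _ _; apply; last exact: setU11.
  exact: setU11.
have resE : residue P' = B by rewrite /residue -maxE setU1K.
have c'a : c' (a |: B) = perm_insert y a (c B) by rewrite ffunE eqxx.
have predE : max_pred P' c' = y.
  apply: (canLR (permK _)); rewrite /max_pred -maxE c'a permM tpermL.
  by rewrite (cyclic_onP _ _ (cyclic_on_attach_block lcP ych)).1.
have PBa : P' :\ (a |: B) = P :\ B.
  by rewrite setU1K // !inE negb_and negbK; apply/orP; right; apply: contraL (setU11 a B) => /(max_notin_block lp).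
have droppedE : residue_dropped P' c' = (B \notin P).
  rewrite /residue_dropped resE predE -maxE PBa.
  have [BP|BnP] := boolP (B \in P); last first.
    have [Bset _] := Bnew BnP; have [F FP yF] := AP y (subsetP (attach_block_sub lcP ych) y yB).
    rewrite Bset eqxx /=; apply/exists_inP; exists F; rewrite // !inE FP andbT.
    by apply: contraNneq BnP => F_y; rewrite Bset -F_y.
  rewrite /=; case: eqP => //= Bset; apply/negbTE/exists_inPn => F /setD1P[FB FP].
  by rewrite -nearly_disjoint_set1 -Bset; apply: nd; rewrite // eq_sym.
split.
- rewrite /remove_partition droppedE -maxE PBa resE.
  have [BP|BnP] := boolP (B \in P); first exact: setD1K.
  by apply/setDidPl; rewrite disjoint_sym disjoints1.
- apply/ffunP => X; rewrite ffunE resE -maxE c'a perm_insertK; last first.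
    by rewrite (cyclic_onP _ _ (cyclic_on_attach_block lcP ych)).1.
  have [->//|XB] := eqVneq X B; have [->|XBa] := eqVneq X (a |: B).
    by rewrite c1 //; apply/negP => /(max_notin_block lp); rewrite setU11.
  by rewrite ffunE -/B (negbTE XBa) (negbTE XB).
- by rewrite /removed_choice predE resE yminB negbK.
Qed.

Lemma card_choices P : linked_partition_on A P -> #|choices P| = 2 * #|A| - num_scme P.
Proof.
move=> lp; have scmeA := scme_sub lp.
have -> : choices P = setX A [set false] :|: setX (A :\: scme P) [set true].
  by apply/setP => -[y [] /=]; rewrite !inE /= ?andbT ?andbF ?orbF // andbC.
rewrite cardsU !cardsX !cards1 !muln1.
have -> : setX A [set false] :&: setX (A :\: scme P) [set true] = set0.
  by apply/setP => -[y [] /=]; rewrite !inE ?andbF.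
rewrite cards0 subn0 cardsD (setIidPr scmeA) /num_scme -/(scme P).
by rewrite mul2n -addnn addnBA // subset_leq_card.
Qed.

Definition insertion_data m := [set x : LT * (T * bool) |
  (x.1 \in linked_cycles_on A m) && (x.2 \in choices x.1.1)].

Lemma card_insertion_data m :
  #|insertion_data m| = (2 * #|A| - m) * #|linked_cycles_on A m|.
Proof.
rewrite -sum1_card; transitivity (\sum_(x in linked_cycles_on A m) \sum_(ch in choices x.1) 1).
  by rewrite pair_big_dep; apply: eq_bigl => -[x ch]; rewrite inE.
rewrite mulnC -sum_nat_const; apply: eq_bigr => -[P c]; rewrite inE /= => /andP[/andP[lp _] /eqP <-].
by rewrite sum1_card card_choices.
Qed.

Lemma card_linked_cycles_nonsingleton m :
  #|[set x in linked_cycles_on (a |: A) m | [set a] \notin x.1]| = #|insertion_data m|.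
Proof.
apply: (card_in_bij
  (f := fun x : LT => ((remove_partition x.1 x.2, remove_arrangement x.1 x.2), removed_choice x.1 x.2))
  (g := fun x : LT * (T * bool) =>
          (insert_partition x.1.1 x.2.1 x.2.2, insert_arrangement x.1.1 x.1.2 x.2.1 x.2.2))).
- move=> [P c]; rewrite !inE /= => /andP[/andP[lc /eqP <-] aP].
  have lc0 : linked_cycle_on A (remove_partition P c) (remove_arrangement P c).
    by rewrite /linked_cycle_on remove_linked_partition ?remove_cyclic_arrangement.
  have chP := removed_choiceP lc aP; have [insP _] := insert_remove lc aP.
  have scme0 : num_scme (remove_partition P c) = num_scme P.
    by rewrite /num_scme -/(scme _) -/(scme _) -(scme_insert lc0 chP) insP.
  by move: chP; rewrite lc0 scme0 eqxx !inE.
- move=> [[P c] [y b]]; rewrite [_ \in insertion_data _]inE [_ \in linked_cycles_on _ _]inE /=.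
  move=> /andP[/andP[lc /eqP <-] ych]; rewrite inE [_ \in linked_cycles_on _ _]inE /=.
  rewrite /linked_cycle_on (insert_linked_partition lc ych) (insert_cyclic_arrangement lc ych).
  by rewrite (set1_max_notin_insert lc ych) /num_scme -/(scme _) -/(scme _) (scme_insert lc ych) eqxx.
- move=> [P c]; rewrite !inE /= => /andP[/andP[lc _] aP].
  by have [-> ->] := insert_remove lc aP.
- move=> [[P c] [y b]]; rewrite [_ \in insertion_data _]inE [_ \in linked_cycles_on _ _]inE /=.
  move=> /andP[/andP[lc _] ych].
  by have [-> -> ->] := remove_insert lc ych.
Qed.

Lemma card_linked_cycles_add_max m : #|linked_cycles_on (a |: A) m| =
  (if m is m'.+1 then #|linked_cycles_on A m'| else 0) + (2 * #|A| - m) * #|linked_cycles_on A m|.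
Proof.
rewrite -card_linked_cycles_set1 -card_insertion_data -card_linked_cycles_nonsingleton.
rewrite -(cardsID [set x : LT | [set a] \in x.1]); congr (_ + _); apply: eq_card => x.
  by rewrite !inE.
by rewrite !inE andbC.
Qed.

End AddMaximum.

(** * Solving the recursion *)

(* The recursion of [card_linked_cycles_add_max] on a [k]-element ground set. *)
Fixpoint lcnum (k m : nat) : nat :=
  if k is k'.+1 then (if m is m'.+1 then lcnum k' m' else 0) + (2 * k' - m) * lcnum k' m
  else (m == 0 : nat).

Lemma lcnum0 k : lcnum k.+1 0 = 0.
Proof. by elim: k => //= k ->; rewrite muln0. Qed.

Lemma lcnum_gt k m : k < m -> lcnum k m = 0.
Proof.
elim: k m => [|k IHk] [|m] //= ltkm.
by rewrite !IHk ?muln0 // ltnW.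
Qed.

(* Once [k = m + t.+1] is substituted, the step is a linear combination of the
   two induction hypotheses. *)
Lemma lcnum_ratio k m : 2 * (k - m) * lcnum k m = m * (2 * k - m - 1) * lcnum k m.+1.
Proof.
elim: k m => [|k IHk] m; first by case: m => [|m]; rewrite /= ?muln0.
case: m => [|m]; first by rewrite lcnum0 muln0 mul0n.
have [km|mk] := leqP k m.
  by rewrite subSS (eqnP km) muln0 mul0n (@lcnum_gt k.+1) ?ltnS ?muln0.
have := IHk m; have := IHk m.+1; rewrite /=.
have [t kE] : exists t, k = m + t.+1 by exists (k - m.+1); rewrite addnS -addSn subnKC.
subst k.
set X := lcnum _ m; set Y := lcnum _ m.+1; set Z := lcnum _ m.+2.
have -> : m + t.+1 - m = t.+1 by lia.
have -> : m + t.+1 - m.+1 = t by lia.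
have -> : m.+1 + t.+1 - m.+1 = t.+1 by lia.
have -> : 2 * (m + t.+1) - m - 1 = m + 2 * t + 1 by lia.
have -> : 2 * (m + t.+1) - m.+1 - 1 = m + 2 * t by lia.
have -> : 2 * (m + t.+1) - m.+1 = m + 2 * t + 1 by lia.
have -> : 2 * (m + t.+1) - m.+2 = m + 2 * t by lia.
have -> : 2 * (m + t.+1).+1 - m.+1 - 1 = m + 2 * t + 2 by lia.
nia.
Qed.

Lemma lcnum_rec k m : 1 <= m -> lcnum k.+1 m = m * lcnum k.+1 m.+1 + lcnum k m.-1.
Proof.
case: m => [|m] // _; have := lcnum_ratio k m.+1; rewrite /=.
have [km|mk] := leqP k m.
  have Y0 : lcnum k m.+1 = 0 by apply: lcnum_gt; rewrite ltnS.
  have Z0 : lcnum k m.+2 = 0 by apply: lcnum_gt; rewrite ltnS leqW.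
  by rewrite Y0 Z0 !(muln0, addn0, add0n).
set Y := lcnum k m.+1; set Z := lcnum k m.+2.
have -> : 2 * k - m.+1 - 1 = m + 2 * (k - m.+1) by lia.
have -> : 2 * k - m.+1 = m + 1 + 2 * (k - m.+1) by lia.
have -> : 2 * k - m.+2 = m + 2 * (k - m.+1) by lia.
move: (k - m.+1) => t; nia.
Qed.

Lemma linked_cycle_on0 N (P : {set {set 'I_N}}) c :
  linked_cycle_on set0 P c = (P == set0) && (c == [ffun=> 1%g]).
Proof.
apply/idP/andP => [/andP[/linked_partition_onP[P0 PA _ _] /cyclic_arrangementP[_ c1]]|].
  have P_0 : P = set0.
    apply/setP => B; rewrite inE; apply/negbTE/negP => BP.
    have /set0Pn[i iB] : B != set0 by apply: contraNneq P0 => <-.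
    by move: (PA B i BP iB); rewrite inE.
  split; first by rewrite P_0.
  by apply/eqP/ffunP => B; rewrite ffunE c1 // P_0 inE.
case=> /eqP-> /eqP->; apply/andP; split.
  by apply/linked_partition_onP; split=> [|B i|i|E F]; rewrite ?inE.
by apply/cyclic_arrangementP; split=> B; rewrite ?inE // ffunE.
Qed.

Lemma card_linked_cycles_on0 N m : #|linked_cycles_on (set0 : {set 'I_N}) m| = (m == 0).
Proof.
have scme0 : num_scme (set0 : {set {set 'I_N}}) = 0.
  apply/eqP; rewrite cards_eq0; apply/eqP/setP => i; rewrite !inE.
  by apply/negbTE/nandP; right; apply/exists_inPn => B; rewrite inE.
case: m => [|m].
  apply/eqP/cards1P; exists (set0, [ffun=> 1%g]); apply/setP => -[P c].
  by rewrite !inE linked_cycle_on0 xpair_eqE; case: eqP => //= ->; rewrite scme0 andbT.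
apply: eq_card0 => -[P c]; rewrite !inE linked_cycle_on0.
by case: eqP => //= ->; rewrite scme0 andbF.
Qed.

Lemma card_ord_ltn N k : k <= N -> #|[set i : 'I_N | i < k]| = k.
Proof.
move=> kN; have widen_inj : injective (widen_ord kN) by move=> i j [] /val_inj.
rewrite -[RHS]card_ord -(card_imset _ widen_inj).
apply: eq_card => i; rewrite inE; apply/idP/imsetP => [ik|[j _ ->]]; last by rewrite /= ltn_ord.
by exists (Ordinal ik) => //; apply: val_inj.
Qed.

Lemma card_linked_cycles_ltn N k m :
  k <= N -> #|linked_cycles_on [set i : 'I_N | i < k] m| = lcnum k m.
Proof.
elim: k m => [|k IHk] m kN.
  have -> : [set i : 'I_N | i < 0] = set0 by apply/setP => i; rewrite !inE.
  exact: card_linked_cycles_on0.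
have -> : [set i : 'I_N | i < k.+1] = Ordinal kN |: [set i : 'I_N | i < k].
  by apply/setP => i; rewrite !inE ltnS leq_eqVlt -val_eqE.
rewrite card_linked_cycles_add_max ?inE ?ltnn // => [|x]; last by rewrite inE.
have kN' := ltnW kN; rewrite card_ord_ltn // IHk //.
by case: m => [|m] //; rewrite IHk.
Qed.

Lemma f_lcnum n m : f n m = lcnum n m.
Proof.
rewrite -(card_linked_cycles_ltn m (leqnn n)); apply: eq_card => x.
have -> : [set i : 'I_n | i < n] = [set: 'I_n] by apply/setP => i; rewrite !inE ltn_ord.
by rewrite !inE.
Qed.

Theorem proposition4p6 :
  f 1 1 = 1%N /\
  (forall n : nat, (1 <= n)%N -> f n 0 = 0%N) /\
  (forall n m : nat, (n < m)%N -> f n m = 0%N) /\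
  (forall n m : nat, (2 <= n)%N -> (1 <= m)%N ->
     f n m = (m * f n m.+1 + f n.-1 m.-1)%N).
Proof.
split; first by rewrite f_lcnum.
split; first by case=> [//|n] _; rewrite f_lcnum lcnum0.
split; first by move=> n m ltnm; rewrite f_lcnum lcnum_gt.
by case=> [//|n] m _ lt0m; rewrite !f_lcnum lcnum_rec.
Qed.
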